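(* Let $(P_n)_{n\in\mathbb{Z}}$ be the Padovan sequence. Let $a,b,m$ be integers with $1\le b\le a$, $m\ge 0$, and $n=am+b>a$. Then for every integer $k\ge 0$ there exist integers $c_1,c_2,c_3$ with $$P_n=c_1P_{a(k+2)+b}+c_2P_{a(k+1)+b}+c_3P_{ak+b};$$ in particular $P_n$ is an integer linear combination of $P_{2a+b}$, $P_{a+b}$ and $P_b$.
   Context: The Padovan sequence is defined by $P_0=P_1=P_2=1$ and $P_{n+3}=P_{n+1}+P_n$, extended to negative indices via $P_n=P_{n+3}-P_{n+1}$. The entries $P_b,P_{a+b},P_{2a+b},\dots$ form the $b$th column of the ''$a$ columns Padovan table'' (the array whose rows are $P_{ja+1},\dots,P_{ja+a}$, $j=0,1,2,\dots$). *)

From Stdlib Require Import ZArith.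
Open Scope Z_scope.

(* One forward step on a window (P_j, P_{j+1}, P_{j+2}) |-> (P_{j+1}, P_{j+2}, P_{j+3}),
   using P_{j+3} = P_{j+1} + P_j. *)
Definition pad_fwd (t : Z * Z * Z) : Z * Z * Z :=
  let '(x, y, z) := t in (y, z, x + y).

(* One backward step (P_j, P_{j+1}, P_{j+2}) |-> (P_{j-1}, P_j, P_{j+1}),
   using P_{j-1} = P_{j+2} - P_j. *)
Definition pad_bwd (t : Z * Z * Z) : Z * Z * Z :=
  let '(x, y, z) := t in (z - x, x, y).

Definition pad_fst (t : Z * Z * Z) : Z := let '(x, _, _) := t in x.

(* The Padovan sequence on all integers: P_0 = P_1 = P_2 = 1,
   P_{n+3} = P_{n+1} + P_n, extended by P_n = P_{n+3} - P_{n+1}. *)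
Definition padovan (n : Z) : Z :=
  if 0 <=? n then pad_fst (Nat.iter (Z.to_nat n) pad_fwd (1, 1, 1))
  else pad_fst (Nat.iter (Z.to_nat (- n)) pad_bwd (1, 1, 1)).

(* The windows (P_n, P_{n+1}, P_{n+2}) satisfy w_{n+a} = M^a w_n for the companion matrix M of
   x^3 - x - 1, and det M^a = 1.  By Cayley-Hamilton the subsequence Q_j = P_{aj+b} therefore obeys
   Q_{j+3} = t Q_{j+2} - s Q_{j+1} + Q_j with integers t, s; as the constant coefficient is 1 this
   recurrence can be run backwards as well as forwards over Z, so every Q_j is an integer
   combination of any three consecutive terms. *)
From Stdlib Require Import ZArith Lia.
Open Scope Z_scope.

Section SpanOfRecurrence.

Variables (Q : Z -> Z) (t s : Z).
Hypothesis Q_rec : forall j, Q (j + 3) = t * Q (j + 2) - s * Q (j + 1) + Q j.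

Variable k : Z.

Definition in_span3 (x : Z) : Prop :=
  exists c1 c2 c3 : Z, x = c1 * Q (k + 2) + c2 * Q (k + 1) + c3 * Q k.

Lemma in_span3_lincomb p q r x y z :
  in_span3 x -> in_span3 y -> in_span3 z -> in_span3 (p * x + q * y + r * z).
Proof.
  intros [x1 [x2 [x3 ->]]] [y1 [y2 [y3 ->]]] [z1 [z2 [z3 ->]]].
  exists (p * x1 + q * y1 + r * z1), (p * x2 + q * y2 + r * z2), (p * x3 + q * y3 + r * z3).
  ring.
Qed.

Definition window_in_span3 (j : Z) : Prop :=
  in_span3 (Q j) /\ in_span3 (Q (j + 1)) /\ in_span3 (Q (j + 2)).

Lemma window_in_span3_succ j : window_in_span3 j -> window_in_span3 (j + 1).
Proof.
  intros (H0 & H1 & H2); unfold window_in_span3.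
  replace (j + 1 + 1) with (j + 2) by ring.
  replace (j + 1 + 2) with (j + 3) by ring.
  split; [|split]; auto.
  replace (Q (j + 3)) with (t * Q (j + 2) + (- s) * Q (j + 1) + 1 * Q j) by (rewrite Q_rec; ring).
  now apply in_span3_lincomb.
Qed.

Lemma window_in_span3_pred j : window_in_span3 (j + 1) -> window_in_span3 j.
Proof.
  intros (H1 & H2 & H3).
  replace (j + 1 + 1) with (j + 2) in H2 by ring.
  replace (j + 1 + 2) with (j + 3) in H3 by ring.
  split; [|split]; auto.
  replace (Q j) with (1 * Q (j + 3) + (- t) * Q (j + 2) + s * Q (j + 1)) by (rewrite Q_rec; ring).
  now apply in_span3_lincomb.
Qed.

Lemma in_span3_every_term j : in_span3 (Q j).
Proof.
  assert (Hwin : forall i, window_in_span3 (k + i)).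
  { apply Z.peano_ind.
    - rewrite Z.add_0_r.
      split; [|split]; [exists 0, 0, 1 | exists 0, 1, 0 | exists 1, 0, 0]; ring.
    - intros i Hi. rewrite Z.add_succ_r, <- Z.add_1_r.
      now apply window_in_span3_succ.
    - intros i Hi. apply window_in_span3_pred.
      now replace (k + Z.pred i + 1) with (k + i) by lia. }
  destruct (Hwin (j - k)) as [Hj _].
  now replace (k + (j - k)) with j in Hj by ring.
Qed.

End SpanOfRecurrence.

Record mat := Mat { m11 : Z; m12 : Z; m13 : Z; m21 : Z; m22 : Z; m23 : Z;
                    m31 : Z; m32 : Z; m33 : Z }.

Definition mat_app (A : mat) (v : Z * Z * Z) : Z * Z * Z :=
  let '(x, y, z) := v in
  (m11 A * x + m12 A * y + m13 A * z,
   m21 A * x + m22 A * y + m23 A * z,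
   m31 A * x + m32 A * y + m33 A * z).

Definition mat_mul (A B : mat) : mat :=
  Mat (m11 A * m11 B + m12 A * m21 B + m13 A * m31 B)
      (m11 A * m12 B + m12 A * m22 B + m13 A * m32 B)
      (m11 A * m13 B + m12 A * m23 B + m13 A * m33 B)
      (m21 A * m11 B + m22 A * m21 B + m23 A * m31 B)
      (m21 A * m12 B + m22 A * m22 B + m23 A * m32 B)
      (m21 A * m13 B + m22 A * m23 B + m23 A * m33 B)
      (m31 A * m11 B + m32 A * m21 B + m33 A * m31 B)
      (m31 A * m12 B + m32 A * m22 B + m33 A * m32 B)
      (m31 A * m13 B + m32 A * m23 B + m33 A * m33 B).

Definition mat_id : mat := Mat 1 0 0 0 1 0 0 0 1.

Definition mat_det (A : mat) : Z :=
  m11 A * (m22 A * m33 A - m23 A * m32 A)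
  - m12 A * (m21 A * m33 A - m23 A * m31 A)
  + m13 A * (m21 A * m32 A - m22 A * m31 A).

Definition mat_trace (A : mat) : Z := m11 A + m22 A + m33 A.

Definition mat_principal_minors2 (A : mat) : Z :=
  (m11 A * m22 A - m12 A * m21 A) + (m11 A * m33 A - m13 A * m31 A)
  + (m22 A * m33 A - m23 A * m32 A).

Lemma mat_app_mul A B v : mat_app (mat_mul A B) v = mat_app A (mat_app B v).
Proof. destruct A, B; destruct v as [[x y] z]; simpl; f_equal; [f_equal|]; ring. Qed.

Lemma mat_det_mul A B : mat_det (mat_mul A B) = mat_det A * mat_det B.
Proof. destruct A, B; unfold mat_det; simpl; ring. Qed.

Lemma cayley_hamilton_fst (A : mat) (v : Z * Z * Z) :
  pad_fst (mat_app A (mat_app A (mat_app A v))) =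
  mat_trace A * pad_fst (mat_app A (mat_app A v))
  - mat_principal_minors2 A * pad_fst (mat_app A v) + mat_det A * pad_fst v.
Proof. destruct A; destruct v as [[x y] z]; unfold mat_trace, mat_principal_minors2, mat_det; simpl; ring. Qed.

Definition padovan_mat : mat := Mat 0 1 0 0 0 1 1 1 0.

Definition padovan_mat_pow (j : nat) : mat := Nat.iter j (mat_mul padovan_mat) mat_id.

Lemma mat_det_padovan_mat_pow j : mat_det (padovan_mat_pow j) = 1.
Proof.
  induction j as [|j IH]; [reflexivity|].
  unfold padovan_mat_pow; simpl Nat.iter; fold (padovan_mat_pow j).
  now rewrite mat_det_mul, IH.
Qed.

Lemma mat_app_padovan_mat v : mat_app padovan_mat v = pad_fwd v.
Proof. destruct v as [[x y] z]; cbn -[Z.add Z.mul]; f_equal; [f_equal|]; ring. Qed.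

Definition pad_window (n : Z) : Z * Z * Z :=
  if 0 <=? n then Nat.iter (Z.to_nat n) pad_fwd (1, 1, 1)
  else Nat.iter (Z.to_nat (- n)) pad_bwd (1, 1, 1).

Lemma padovan_window n : padovan n = pad_fst (pad_window n).
Proof. unfold padovan, pad_window. now destruct (0 <=? n). Qed.

Lemma pad_fwd_bwd v : pad_fwd (pad_bwd v) = v.
Proof. destruct v as [[x y] z]; simpl; f_equal; f_equal; ring. Qed.

Lemma pad_window_succ n : pad_window (n + 1) = pad_fwd (pad_window n).
Proof.
  unfold pad_window. destruct (Z.leb_spec 0 n) as [Hn|Hn].
  - rewrite (proj2 (Z.leb_le 0 (n + 1))) by lia.
    now replace (Z.to_nat (n + 1)) with (S (Z.to_nat n)) by lia.
  - replace (Z.to_nat (- n)) with (S (Z.to_nat (- (n + 1)))) by lia.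
    simpl Nat.iter. rewrite pad_fwd_bwd.
    destruct (Z.leb_spec 0 (n + 1)); [|reflexivity].
    now replace (n + 1) with 0 by lia.
Qed.

Lemma pad_window_add n j : pad_window (n + Z.of_nat j) = mat_app (padovan_mat_pow j) (pad_window n).
Proof.
  induction j as [|j IH].
  - rewrite Z.add_0_r. destruct (pad_window n) as [[x y] z]; cbn -[Z.add Z.mul]; f_equal; [f_equal|]; ring.
  - unfold padovan_mat_pow; simpl Nat.iter; fold (padovan_mat_pow j).
    rewrite Nat2Z.inj_succ, Z.add_succ_r, <- Z.add_1_r, pad_window_succ, IH.
    now rewrite mat_app_mul, mat_app_padovan_mat.
Qed.

Lemma padovan_subseq_rec (a b j : Z) : 0 <= a ->
  let A := padovan_mat_pow (Z.to_nat a) in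
  padovan (a * (j + 3) + b) =
  mat_trace A * padovan (a * (j + 2) + b) - mat_principal_minors2 A * padovan (a * (j + 1) + b)
  + padovan (a * j + b).
Proof.
  intros Ha A.
  assert (Hshift : forall i, pad_window (a * (i + 1) + b) = mat_app A (pad_window (a * i + b))).
  { intro i. unfold A. rewrite <- pad_window_add. f_equal. lia. }
  rewrite !padovan_window.
  replace (j + 3) with (j + 2 + 1) by ring.
  replace (j + 2) with (j + 1 + 1) by ring.
  rewrite !Hshift, cayley_hamilton_fst, (mat_det_padovan_mat_pow (Z.to_nat a) : mat_det A = 1).
  ring.
Qed.

Theorem theorem3p4 (a b m n : Z) :
  1 <= b -> b <= a -> 0 <= m -> n = a * m + b -> a < n ->
  forall k : Z, 0 <= k ->
    exists c1 c2 c3 : Z,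
      padovan n = c1 * padovan (a * (k + 2) + b) + c2 * padovan (a * (k + 1) + b)
                  + c3 * padovan (a * k + b).
Proof.
  intros Hb Hba _ -> _ k _.
  exact (in_span3_every_term (fun j => padovan (a * j + b)) _ _
           (fun j => padovan_subseq_rec a b j ltac:(lia)) k m).
Qed.
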